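(* Every infinite $\lambda$-term that is $\lambda_{\mathsf{letrec}}$-expressible is strongly regular.
   Context: Infinite $\lambda$-terms are possibly infinite terms built from variables, abstractions and applications, modulo $\alpha$-equivalence. $\lambda_{\mathsf{letrec}}$-terms are finite terms $L::=x\mid \lambda x.L\mid L\,L\mid \mathsf{letrec}\ f_1=L_1,\dots,f_n=L_n\ \mathsf{in}\ L$ (recursion variables $f_i$ bound in all $L_j$). An infinite $\lambda$-term $M$ is $\lambda_{\mathsf{letrec}}$-expressible if some $\lambda_{\mathsf{letrec}}$-term $L$ unfolds to $M$, i.e. there is a strongly convergent, possibly infinite rewrite sequence from $L$ to $M$ in the letrec-unfolding rewrite system (which pushes $\mathsf{letrec}$-bindings into abstractions and applications, replaces a recursion variable $f_i$ in the scope of its binding $f_i=L_i$ by $L_i$, merges nested $\mathsf{letrec}$s, and removes unused bindings and empty $\mathsf{letrec}$s). Strong regularity: a prefixed term is $\lambda x_1\ldots x_n.M$ ($n\ge0$, distinct variables, separate abstraction prefix; $\lambda.M$ for empty prefix) with the free variables of $M$ among the $x_i$. The rewrite system $\mathit{Reg}^+$ on prefixed terms has steps $\lambda\vec{x}.\lambda y.M\to\lambda\vec{x}y.M$; $\lambda\vec{x}.(M_0\,M_1)\to\lambda\vec{x}.M_i$ ($i=0,1$); $\lambda x_1\ldots x_n.M\to\lambda x_1\ldots x_{n-1}.M$ if $x_n$ is not free in $M$. A scope-delimiting strategy $\mathbb{S}$ for $\mathit{Reg}^+$ is a history-aware strategy: to every finite $\mathit{Reg}^+$-rewrite sequence ending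 in a non-normal form it assigns a nonempty set of $\mathit{Reg}^+$-steps from its last term. $\mathrm{GST}_{\mathbb{S}}(M)$ is the set of prefixed terms reachable from $\lambda.M$ by rewrite sequences following $\mathbb{S}$. $M$ is strongly regular if $\mathrm{GST}_{\mathbb{S}}(M)$ is finite for some such $\mathbb{S}$. *)

(* Locally nameless is avoided: all terms use de Bruijn indices,
   so alpha-equivalence is syntactic identity (bisimilarity for infinite terms). *)
From Stdlib Require Import Arith List.
Import ListNotations.

CoInductive iterm : Type :=
| IVar : nat -> iterm
| IAbs : iterm -> iterm
| IApp : iterm -> iterm -> iterm.

CoInductive ibisim : iterm -> iterm -> Prop :=
| bis_var k : ibisim (IVar k) (IVar k)
| bis_abs t t' : ibisim t t' -> ibisim (IAbs t) (IAbs t')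
| bis_app t u t' u' : ibisim t t' -> ibisim u u' -> ibisim (IApp t u) (IApp t' u').

Inductive ifree : nat -> iterm -> Prop :=
| ifree_var k : ifree k (IVar k)
| ifree_abs k t : ifree (S k) t -> ifree k (IAbs t)
| ifree_appl k t u : ifree k t -> ifree k (IApp t u)
| ifree_appr k t u : ifree k u -> ifree k (IApp t u).

Definition iclosed (t : iterm) : Prop := forall k, ~ ifree k t.

(* decrement the free indices >= c (used when the index c does not occur) *)
CoFixpoint idown (c : nat) (t : iterm) : iterm :=
  match t with
  | IVar k => if k <? c then IVar k else IVar (k - 1)
  | IAbs t => IAbs (idown (S c) t)
  | IApp t u => IApp (idown c t) (idown c u)
  end.

(* A prefixed term  \x1...xn. M  is represented by (n, M): the prefix   *)
(* variables are the de Bruijn indices 0..n-1 of M, index 0 being x_n. *)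

Definition pterm : Type := (nat * iterm)%type.

Definition pbisim (p q : pterm) : Prop := fst p = fst q /\ ibisim (snd p) (snd q).

Inductive reg_label : Type := RLam | RAppL | RAppR | RDel.

Inductive reg_step : pterm -> reg_label -> pterm -> Prop :=
| reg_lam n t : reg_step (n, IAbs t) RLam (S n, t)
| reg_appl n t u : reg_step (n, IApp t u) RAppL (n, t)
| reg_appr n t u : reg_step (n, IApp t u) RAppR (n, u)
| reg_del n t : ~ ifree 0 t -> reg_step (S n, t) RDel (n, idown 0 t).

Inductive reg_seq (p0 : pterm) : list reg_label -> pterm -> Prop :=
| rs_nil : reg_seq p0 [] p0
| rs_snoc l p a q : reg_seq p0 l p -> reg_step p a q -> reg_seq p0 (l ++ [a]) q.

(* A (history-aware) strategy: to every finite rewrite sequence (from the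
   start term, given by its step labels) it assigns a set of steps. *)
Definition strategy : Type := list reg_label -> reg_label -> Prop.

Definition scope_delimiting (S : strategy) (p0 : pterm) : Prop :=
  forall l p, reg_seq p0 l p ->
    (exists a q, reg_step p a q) ->
    (exists a, S l a) /\ (forall a, S l a -> exists q, reg_step p a q).

Inductive follows (S : strategy) (p0 : pterm) : list reg_label -> pterm -> Prop :=
| fol_nil : follows S p0 [] p0
| fol_snoc l p a q : follows S p0 l p -> S l a -> reg_step p a q ->
    follows S p0 (l ++ [a]) q.

Definition GST (S : strategy) (M : iterm) (p : pterm) : Prop :=
  exists l, follows S (0, M) l p.

Definition finite_pset (P : pterm -> Prop) : Prop :=
  exists ps : list pterm, forall p, P p -> exists q, In q ps /\ pbisim p q.

Definition strongly_regular (M : iterm) : Prop :=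
  exists S : strategy, scope_delimiting S (0, M) /\ finite_pset (GST S M).

(* lambda-letrec terms (de Bruijn). [LLet bs t] with n = length bs     *)
(* binds the indices 0..n-1 (index i = recursion variable f_{i+1})    *)
(* in every body of bs and in t.                                        *)

Inductive lterm : Type :=
| LVar : nat -> lterm
| LLam : lterm -> lterm
| LApp : lterm -> lterm -> lterm
| LLet : list lterm -> lterm -> lterm.

Definition up (n : nat) (f : nat -> nat) (k : nat) : nat :=
  if k <? n then k else n + f (k - n).

Fixpoint rename (f : nat -> nat) (t : lterm) : lterm :=
  match t with
  | LVar k => LVar (f k)
  | LLam t => LLam (rename (up 1 f) t)
  | LApp t u => LApp (rename f t) (rename f u)
  | LLet bs t => LLet (map (rename (up (length bs) f)) bs)
                      (rename (up (length bs) f) t)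
  end.

Fixpoint occursb (i : nat) (t : lterm) : bool :=
  match t with
  | LVar k => Nat.eqb k i
  | LLam t => occursb (S i) t
  | LApp t u => occursb i t || occursb i u
  | LLet bs t => existsb (occursb (i + length bs)) bs || occursb (i + length bs) t
  end.

(* index permutation for pushing letrec (n bindings) into an abstraction:
   inside [LLet bs (LLam t)], in t: 0 = lambda var, 1..n = bindings;
   inside [LLam (LLet bs' t')], in t': 0..n-1 = bindings, n = lambda var. *)
Definition push_perm (n k : nat) : nat :=
  if k =? 0 then n else if k <=? n then k - 1 else k.

Definition count_true (m : list bool) : nat := length (filter (fun b => b) m).

(* renaming after keeping the bindings selected by mask (length n) *)
Definition gc_ren (n : nat) (mask : list bool) (k : nat) : nat :=
  if k <? n then count_true (firstn k mask) else k - n + count_true mask.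

Definition kept (bs : list lterm) (mask : list bool) : list lterm :=
  map fst (filter snd (combine bs mask)).

Inductive unf_root : lterm -> lterm -> Prop :=
| unf_app bs t u :
    unf_root (LLet bs (LApp t u)) (LApp (LLet bs t) (LLet bs u))
| unf_lam bs t :
    unf_root (LLet bs (LLam t))
      (LLam (LLet (map (rename (up (length bs) S)) bs)
                  (rename (push_perm (length bs)) t)))
| unf_rec bs i :
    i < length bs ->
    unf_root (LLet bs (LVar i)) (LLet bs (nth i bs (LVar 0)))
| unf_merge bs1 bs2 t :
    unf_root (LLet bs1 (LLet bs2 t))
      (LLet (bs2 ++ map (rename (fun k => k + length bs2)) bs1) t)
| unf_gc bs t mask :
    length mask = length bs ->
    (forall i, i < length bs -> nth i mask true = false ->
       occursb i t = false /\
       forall j, j < length bs -> nth j mask true = true ->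
         occursb i (nth j bs (LVar 0)) = false) ->
    unf_root (LLet bs t)
      (LLet (map (rename (gc_ren (length bs) mask)) (kept bs mask))
            (rename (gc_ren (length bs) mask) t))
| unf_nil t : unf_root (LLet [] t) t.

Inductive unf_step : nat -> lterm -> lterm -> Prop :=
| us_root s t : unf_root s t -> unf_step 0 s t
| us_lam d s t : unf_step d s t -> unf_step (S d) (LLam s) (LLam t)
| us_appl d s t u : unf_step d s t -> unf_step (S d) (LApp s u) (LApp t u)
| us_appr d s t u : unf_step d s t -> unf_step (S d) (LApp u s) (LApp u t)
| us_letin d bs s t : unf_step d s t -> unf_step (S d) (LLet bs s) (LLet bs t)
| us_letbind d bs1 bs2 s t b : unf_step d s t ->
    unf_step (S d) (LLet (bs1 ++ s :: bs2) b) (LLet (bs1 ++ t :: bs2) b).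

(* t and M coincide up to depth D (letrec nodes never agree with lambda nodes) *)
Fixpoint agree (D : nat) (t : lterm) (M : iterm) : Prop :=
  match D with
  | 0 => True
  | S D =>
    match t, M with
    | LVar k, IVar k' => k = k'
    | LLam t, IAbs M => agree D t M
    | LApp t u, IApp M N => agree D t M /\ agree D u N
    | _, _ => False
    end
  end.

(* L unfolds to M: a strongly convergent rewrite sequence of length <= omega
   (steps[i] = None means the sequence has already ended: ts (S i) = ts i). *)
Definition unfolds_to (L : lterm) (M : iterm) : Prop :=
  exists (ts : nat -> lterm) (steps : nat -> option nat),
    ts 0 = L /\
    (forall i, match steps i with
               | None => ts (S i) = ts i /\ steps (S i) = None
               | Some d => unf_step d (ts i) (ts (S i))
               end) /\
    (forall D, exists N, forall i, N <= i ->
        (forall d, steps i = Some d -> D <= d) /\ agree D (ts i) M).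

Definition letrec_expressible (M : iterm) : Prop :=
  exists L : lterm, unfolds_to L M.

(* An environment machine interprets letrec-terms: a closure (t, s) pairs a
   term with an environment of lambda binders and letrec blocks, weak head
   evaluation resolves recursion variables by lookup, and iterating it
   coinductively yields the infinite term denoted by the closure.  Unfolding
   steps are simulated backwards by a coinductive relation on closures, so they
   preserve denotations; as a strongly convergent unfolding of L fixes every
   finite depth of M after finitely many steps, the closure (L, []) denotes M.

   Now follow the eager strategy: delete the innermost prefix variable as soon
   as it does not occur, otherwise make any structural step.  Every prefixed
   term it reaches is denoted by a closure (t, s) where t is a subterm
   occurrence of L, s has one of the finitely many binding-context shapes of L,
   and the lambda binders of s carry exactly the prefix variables, in order.
   There are finitely many such closures and each denotes a unique term, so
   GST is finite. *)

From Stdlib Require Import Arith List Lia Bool Classical.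
Import ListNotations.

(** * Environments and weak head evaluation *)

(* [BLam (Some j)] binds a lambda variable to the index [j] of the denoted
   infinite term; [BLam None] binds a variable removed by a deletion step. *)
Inductive binder := BLam (o : option nat) | BLet (bs : list lterm).
Definition env := list binder.
Definition closure := (lterm * env)%type.

Inductive binding := Unbound | BoundVar (j : nat) | BoundBody (b : lterm) (s : env).

Fixpoint lookup (i : nat) (s : env) : binding :=
  match s with
  | [] => Unbound
  | BLam o :: s' =>
      match i with
      | 0 => match o with Some j => BoundVar j | None => Unbound end
      | S i' => lookup i' s'
      end
  | BLet bs :: s' =>
      if i <? length bs then BoundBody (nth i bs (LVar 0)) s
      else lookup (i - length bs) s'
  end.

Lemma lookup_let_lt i bs s : i < length bs ->
  lookup i (BLet bs :: s) = BoundBody (nth i bs (LVar 0)) (BLet bs :: s).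
Proof. intros H. simpl. apply Nat.ltb_lt in H. rewrite H. reflexivity. Qed.

Lemma lookup_let_ge i bs s : length bs <= i ->
  lookup i (BLet bs :: s) = lookup (i - length bs) s.
Proof. intros H. simpl. destruct (Nat.ltb_spec i (length bs)); [lia|reflexivity]. Qed.

Definition binder_shift (x : binder) : binder :=
  match x with BLam (Some j) => BLam (Some (S j)) | e => e end.
Definition env_shift (s : env) : env := map binder_shift s.
Definition env_lam (s : env) : env := BLam (Some 0) :: env_shift s.

Definition binding_shift (l : binding) : binding :=
  match l with
  | BoundBody b t => BoundBody b (env_shift t)
  | BoundVar j => BoundVar (S j)
  | Unbound => Unbound
  end.

Lemma lookup_shift i s : lookup i (env_shift s) = binding_shift (lookup i s).
Proof.
  revert i; induction s as [|[[j|]|bs] s IH]; intros i; simpl; auto.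
  - destruct i; simpl; auto.
  - destruct i; simpl; auto.
  - destruct (i <? length bs); simpl; auto.
Qed.

Inductive head :=
| HLam (t : lterm) (s : env)
| HApp (a b : lterm) (s : env)
| HVar (j : nat).

Inductive whnf : lterm -> env -> head -> Prop :=
| whnf_lam t s : whnf (LLam t) s (HLam t s)
| whnf_app a b s : whnf (LApp a b) s (HApp a b s)
| whnf_let bs t s h : whnf t (BLet bs :: s) h -> whnf (LLet bs t) s h
| whnf_var i s j : lookup i s = BoundVar j -> whnf (LVar i) s (HVar j)
| whnf_body i s b tau h :
    lookup i s = BoundBody b tau -> whnf b tau h -> whnf (LVar i) s h.

Lemma whnf_det t s h1 : whnf t s h1 -> forall h2, whnf t s h2 -> h1 = h2.
Proof.
  induction 1 as [t s|a b s|bs t s h Hw IH|i s j Hl|i s b tau h Hl Hw IH];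
    intros h2 H2; inversion H2; subst; auto; try congruence.
  match goal with H : lookup i s = BoundBody _ _ |- _ => rewrite Hl in H; inversion H; subst end.
  apply IH; auto.
Qed.

CoInductive den : lterm -> env -> iterm -> Prop :=
| den_lam t s t' s' N :
    whnf t s (HLam t' s') -> den t' (env_lam s') N -> den t s (IAbs N)
| den_app t s a b s' A B :
    whnf t s (HApp a b s') -> den a s' A -> den b s' B -> den t s (IApp A B)
| den_var t s j : whnf t s (HVar j) -> den t s (IVar j).

Fixpoint den_approx (D : nat) (t : lterm) (s : env) (N : iterm) : Prop :=
  match D with
  | 0 => True
  | S D' => exists h, whnf t s h /\
      match h, N with
      | HLam t' s', IAbs N' => den_approx D' t' (env_lam s') N'
      | HApp a b s', IApp A B => den_approx D' a s' A /\ den_approx D' b s' B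
      | HVar j, IVar k => j = k
      | _, _ => False
      end
  end.

Lemma den_of_approx : forall t s N, (forall D, den_approx D t s N) -> den t s N.
Proof.
  cofix CH. intros t s N H.
  destruct (H 1) as [h [Hw Hm]].
  destruct h as [t' s'|a b s'|j]; destruct N as [k|N'|A B]; try contradiction.
  - apply den_lam with t' s'; auto. apply CH. intros D.
    destruct (H (S D)) as [h2 [Hw2 Hm2]]. rewrite <- (whnf_det _ _ _ Hw _ Hw2) in Hm2.
    exact Hm2.
  - apply den_app with a b s'; auto; apply CH; intros D;
      destruct (H (S D)) as [h2 [Hw2 Hm2]]; rewrite <- (whnf_det _ _ _ Hw _ Hw2) in Hm2;
      apply Hm2.
  - subst. apply den_var; auto.
Qed.

Lemma den_det : forall t s N1 N2, den t s N1 -> den t s N2 -> ibisim N1 N2.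
Proof.
  cofix CH. intros t s N1 N2 H1 H2.
  destruct H1 as [t s t' s' N Hw Hd|t s a b s' A B Hw Ha Hb|t s j Hw];
  destruct H2 as [t0 s0 t0' s0' N0 Hw0 Hd0|t0 s0 a0 b0 s0' A0 B0 Hw0 Ha0 Hb0|t0 s0 j0 Hw0];
  pose proof (whnf_det _ _ _ Hw _ Hw0) as E; try discriminate; inversion E; subst.
  - constructor. eapply CH; eauto.
  - constructor; eapply CH; eauto.
  - constructor.
Qed.

(** * Simulating unfolding steps on closures *)

Definition binding_match (l1 l2 : binding) : Prop :=
  match l1, l2 with
  | Unbound, Unbound => True
  | BoundVar a, BoundVar b => a = b
  | BoundBody _ _, BoundBody _ _ => True
  | _, _ => False
  end.

(* [env_sim R P f s1 s2]: index [i] (for [P i]) in [s1] plays the role of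
   [f i] in [s2], with [R]-related body closures. *)
Definition env_sim (R : closure -> closure -> Prop) (P : nat -> Prop) (f : nat -> nat)
  (s1 s2 : env) : Prop :=
  (forall i, P i -> binding_match (lookup i s1) (lookup (f i) s2)) /\
  (forall i b1 t1 b2 t2, P i -> lookup i s1 = BoundBody b1 t1 ->
     lookup (f i) s2 = BoundBody b2 t2 -> R (b1, t1) (b2, t2)).

Notation env_sim_id R s1 s2 := (env_sim R (fun _ => True) (fun i => i) s1 s2).

Inductive csimF (R : closure -> closure -> Prop) : closure -> closure -> Prop :=
| csim_rename (P : nat -> Prop) f t s1 s2 :
    (forall i, occursb i t = true -> P i) -> env_sim R P f s1 s2 ->
    csimF R (t, s1) (rename f t, s2)
| csim_env t s1 s2 : env_sim_id R s1 s2 -> csimF R (t, s1) (t, s2)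
| csim_step d t1 t2 s1 s2 :
    unf_step d t1 t2 -> env_sim_id R s1 s2 -> csimF R (t1, s1) (t2, s2)
| csim_let bs t1 t2 s1 s2 :
    R (t1, s1) (t2, BLet bs :: s2) -> csimF R (t1, s1) (LLet bs t2, s2).

(* [csim c1 c2]: c2 is obtained from c1 by unfolding, in the term or (through
   the coinduction) in the bodies of its environment. *)
CoInductive csim (c1 c2 : closure) : Prop :=
| csim_fold : csimF csim c1 c2 -> csim c1 c2.

Lemma csim_unfold c1 c2 : csim c1 c2 -> csimF csim c1 c2.
Proof. intros []; assumption. Qed.

Lemma env_sim_mono (R R' : closure -> closure -> Prop) P f s1 s2 :
  (forall a b, R a b -> R' a b) -> env_sim R P f s1 s2 -> env_sim R' P f s1 s2.
Proof. intros HR [H1 H2]; split; eauto. Qed.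

Lemma env_sim_sub R (P P' : nat -> Prop) f s1 s2 :
  (forall i, P' i -> P i) -> env_sim R P f s1 s2 -> env_sim R P' f s1 s2.
Proof. intros HP [H1 H2]; split; eauto. Qed.

Lemma env_sim_ext R (P : nat -> Prop) f g s1 s2 :
  (forall i, P i -> f i = g i) -> env_sim R P f s1 s2 -> env_sim R P g s1 s2.
Proof.
  intros Hfg [H1 H2]; split.
  - intros i Hp. rewrite <- Hfg; auto.
  - intros i b1 t1 b2 t2 Hp E1 E2. rewrite <- Hfg in E2; eauto.
Qed.

Lemma csim_coind (X : closure -> closure -> Prop) :
  (forall c1 c2, X c1 c2 -> csimF (fun a b => X a b \/ csim a b) c1 c2) ->
  forall c1 c2, X c1 c2 -> csim c1 c2.
Proof.
  intros HX. cofix CH. intros c1 c2 Hx. constructor.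
  (* [env_sim_mono] would hide the corecursive call from the guard checker *)
  destruct (HX c1 c2 Hx) as [P f t s1 s2 Ho [Hs Hb]|t s1 s2 [Hs Hb]|
                             d t1 t2 s1 s2 Hst [Hs Hb]|bs t1 t2 s1 s2 Hr];
    [apply csim_rename with P|apply csim_env|apply csim_step with d|apply csim_let]; auto.
  1-3: split; auto; intros i b1 u1 b2 u2 Hp E1 E2;
       destruct (Hb i b1 u1 b2 u2 Hp E1 E2) as [Hx'|Hc]; [exact (CH _ _ Hx')|exact Hc].
  destruct Hr as [Hx'|Hc]; [exact (CH _ _ Hx')|exact Hc].
Qed.

Lemma csim_refl c : csim c c.
Proof.
  refine (csim_coind (fun a b => a = b) _ c c eq_refl).
  intros [t s] c2 <-. apply csim_env. split.
  - intros i _. destruct (lookup i s); simpl; auto.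
  - intros i b1 t1 b2 t2 _ E1 E2. rewrite E1 in E2. inversion E2; subst. left; reflexivity.
Qed.

Lemma env_sim_shift R R' P f s1 s2 :
  (forall b1 t1 b2 t2, R (b1, t1) (b2, t2) -> R' (b1, env_shift t1) (b2, env_shift t2)) ->
  env_sim R P f s1 s2 -> env_sim R' P f (env_shift s1) (env_shift s2).
Proof.
  intros HR [H1 H2]; split.
  - intros i Hp. rewrite !lookup_shift. specialize (H1 i Hp).
    destruct (lookup i s1), (lookup (f i) s2); simpl in *; auto.
  - intros i b1 t1 b2 t2 Hp E1 E2. rewrite lookup_shift in E1, E2.
    destruct (lookup i s1) eqn:F1; try discriminate.
    destruct (lookup (f i) s2) eqn:F2; try discriminate.
    simpl in E1, E2. inversion E1; inversion E2; subst. apply HR. eauto.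
Qed.

Lemma csim_shift t1 s1 t2 s2 :
  csim (t1, s1) (t2, s2) -> csim (t1, env_shift s1) (t2, env_shift s2).
Proof.
  intros H.
  apply (csim_coind (fun c1 c2 => exists t1 s1 t2 s2, c1 = (t1, env_shift s1) /\
           c2 = (t2, env_shift s2) /\ csim (t1, s1) (t2, s2))).
  2: { exists t1, s1, t2, s2; auto. }
  clear. intros c1 c2 (t1 & s1 & t2 & s2 & -> & -> & H).
  assert (Hsh : forall P f s1 s2, env_sim csim P f s1 s2 ->
     env_sim (fun a b => (exists t1 s1 t2 s2, a = (t1, env_shift s1) /\
           b = (t2, env_shift s2) /\ csim (t1, s1) (t2, s2)) \/ csim a b)
       P f (env_shift s1) (env_shift s2)).
  { intros P f u1 u2. apply env_sim_shift. intros; left; do 4 eexists; eauto. }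
  apply csim_unfold in H. inversion H; subst.
  - apply csim_rename with P; auto.
  - apply csim_env; auto.
  - apply csim_step with d; auto.
  - apply csim_let. left. do 4 eexists. split; [reflexivity|]. split; [|eassumption]. reflexivity.
Qed.

Lemma env_sim_id_shift s1 s2 :
  env_sim_id csim s1 s2 -> env_sim_id csim (env_shift s1) (env_shift s2).
Proof. apply env_sim_shift. intros; apply csim_shift; auto. Qed.

Lemma up_lt n f i : i < n -> up n f i = i.
Proof. intros H; unfold up. apply Nat.ltb_lt in H; rewrite H; auto. Qed.

Lemma up_ge n f i : n <= i -> up n f i = n + f (i - n).
Proof. intros H; unfold up. destruct (Nat.ltb_spec i n); [lia|auto]. Qed.

Lemma env_sim_lam P P' f s1 s2 :
  env_sim csim P f s1 s2 ->
  (forall i, P' i -> i = 0 \/ P (i - 1)) ->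
  env_sim csim P' (up 1 f) (env_lam s1) (env_lam s2).
Proof.
  intros HE HP.
  assert (HE' : env_sim csim P f (env_shift s1) (env_shift s2)).
  { eapply env_sim_shift; [|exact HE]. intros; apply csim_shift; auto. }
  destruct HE' as [H1 H2]. split.
  - intros [|i] Hp; simpl; auto.
    destruct (HP _ Hp) as [E|E]; [discriminate|]. simpl in E. rewrite Nat.sub_0_r in E.
    unfold up; simpl. rewrite Nat.sub_0_r. apply H1; auto.
  - intros [|i] b1 t1 b2 t2 Hp E1 E2; simpl in E1; [discriminate|].
    destruct (HP _ Hp) as [E|E]; [discriminate|]. simpl in E. rewrite Nat.sub_0_r in E.
    unfold up in E2; simpl in E2. rewrite Nat.sub_0_r in E2. eauto.
Qed.

Lemma env_sim_id_lam s1 s2 :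
  env_sim_id csim s1 s2 -> env_sim_id csim (env_lam s1) (env_lam s2).
Proof.
  intros H. eapply env_sim_ext; [|eapply env_sim_lam; [exact H|]].
  - intros [|i] _; unfold up; simpl; auto. rewrite Nat.sub_0_r; auto.
  - intros; right; auto.
Qed.

Lemma env_sim_id_nil R s1 s2 :
  env_sim_id R s1 s2 -> env_sim_id R (BLet [] :: s1) s2.
Proof. intros [H1 H2]; split; intros i; simpl; rewrite Nat.sub_0_r; eauto. Qed.

Lemma nth_map_lt (g : lterm -> lterm) bs i : i < length bs ->
  nth i (map g bs) (LVar 0) = g (nth i bs (LVar 0)).
Proof.
  intros H. rewrite nth_indep with (d' := g (LVar 0)) by (rewrite length_map; auto).
  apply map_nth.
Qed.

Lemma env_sim_let_gen (R : closure -> closure -> Prop) s1 s2 B1 B2 :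
  env_sim_id R s1 s2 -> length B1 = length B2 ->
  (forall i, i < length B1 ->
     R (nth i B1 (LVar 0), BLet B1 :: s1) (nth i B2 (LVar 0), BLet B2 :: s2)) ->
  env_sim_id R (BLet B1 :: s1) (BLet B2 :: s2).
Proof.
  intros [H1 H2] HL HB; split.
  - intros i _. destruct (Nat.lt_ge_cases i (length B1)).
    + rewrite lookup_let_lt, lookup_let_lt by lia. simpl; auto.
    + rewrite lookup_let_ge, lookup_let_ge by lia. rewrite HL. auto.
  - intros i b1 t1 b2 t2 _ E1 E2. destruct (Nat.lt_ge_cases i (length B1)).
    + rewrite lookup_let_lt in E1, E2 by lia. inversion E1; inversion E2; subst. auto.
    + rewrite lookup_let_ge in E1, E2 by lia. rewrite HL in E1. eauto.
Qed.

Lemma env_sim_id_let s1 s2 B1 B2 :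
  env_sim_id csim s1 s2 -> length B1 = length B2 ->
  (forall i, i < length B1 -> nth i B1 (LVar 0) = nth i B2 (LVar 0) \/
       exists d, unf_step d (nth i B1 (LVar 0)) (nth i B2 (LVar 0))) ->
  env_sim_id csim (BLet B1 :: s1) (BLet B2 :: s2).
Proof.
  intros HE HL HB.
  set (X := fun c1 c2 => exists i, i < length B1 /\ c1 = (nth i B1 (LVar 0), BLet B1 :: s1)
                                /\ c2 = (nth i B2 (LVar 0), BLet B2 :: s2)).
  assert (HX : forall c1 c2, X c1 c2 -> csim c1 c2).
  { apply csim_coind. intros c1 c2 (i & Hi & -> & ->).
    assert (HE' : env_sim_id (fun a b => X a b \/ csim a b) (BLet B1 :: s1) (BLet B2 :: s2)).
    { apply env_sim_let_gen; auto.
      - eapply env_sim_mono; [|exact HE]. auto.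
      - intros j Hj; left; exists j; auto. }
    destruct (HB i Hi) as [E|[d Hd]].
    - rewrite E. apply csim_env. exact HE'.
    - eapply csim_step; eauto. }
  apply env_sim_let_gen; auto. intros i Hi; apply HX; exists i; auto.
Qed.

Lemma env_sim_id_let_same s1 s2 B :
  env_sim_id csim s1 s2 -> env_sim_id csim (BLet B :: s1) (BLet B :: s2).
Proof. intros; apply env_sim_id_let; auto. Qed.

Lemma env_sim_rename_let_gen (R : closure -> closure -> Prop) (P Q : nat -> Prop) f s1 s2 bs :
  env_sim R P f s1 s2 ->
  (forall i, Q i -> i < length bs \/ P (i - length bs)) ->
  (forall i, i < length bs -> R (nth i bs (LVar 0), BLet bs :: s1)
       (rename (up (length bs) f) (nth i bs (LVar 0)),
        BLet (map (rename (up (length bs) f)) bs) :: s2)) ->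
  env_sim R Q (up (length bs) f) (BLet bs :: s1)
    (BLet (map (rename (up (length bs) f)) bs) :: s2).
Proof.
  intros [H1 H2] HQ HB. set (n := length bs) in *.
  assert (Hn : length (map (rename (up n f)) bs) = n) by (rewrite length_map; auto).
  split.
  - intros i Hq. destruct (Nat.lt_ge_cases i n).
    + rewrite up_lt by auto. rewrite lookup_let_lt, lookup_let_lt by lia. simpl; auto.
    + destruct (HQ i Hq) as [|Hp]; [lia|].
      rewrite up_ge by auto. rewrite lookup_let_ge by lia. rewrite lookup_let_ge by lia.
      rewrite Hn. replace (n + f (i - n) - n) with (f (i - n)) by lia. auto.
  - intros i b1 t1 b2 t2 Hq E1 E2. destruct (Nat.lt_ge_cases i n).
    + rewrite up_lt in E2 by auto. rewrite lookup_let_lt in E1, E2 by lia.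
      inversion E1; inversion E2; subst. rewrite nth_map_lt by auto. apply HB; auto.
    + destruct (HQ i Hq) as [|Hp]; [lia|].
      rewrite up_ge in E2 by auto. rewrite lookup_let_ge in E1 by lia.
      rewrite lookup_let_ge in E2 by lia.
      rewrite Hn in E2. replace (n + f (i - n) - n) with (f (i - n)) in E2 by lia. eauto.
Qed.

Lemma csim_rename_let_bodies P f s1 s2 bs :
  env_sim csim P f s1 s2 ->
  (forall b i, In b bs -> occursb (i + length bs) b = true -> P i) ->
  forall i, i < length bs -> csim (nth i bs (LVar 0), BLet bs :: s1)
       (rename (up (length bs) f) (nth i bs (LVar 0)),
        BLet (map (rename (up (length bs) f)) bs) :: s2).
Proof.
  intros HE HO.
  set (X := fun c1 c2 => exists i, i < length bs /\ c1 = (nth i bs (LVar 0), BLet bs :: s1)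
      /\ c2 = (rename (up (length bs) f) (nth i bs (LVar 0)),
        BLet (map (rename (up (length bs) f)) bs) :: s2)).
  assert (HX : forall c1 c2, X c1 c2 -> csim c1 c2).
  { apply csim_coind. intros c1 c2 (i & Hi & -> & ->).
    apply csim_rename with (P := fun j => occursb j (nth i bs (LVar 0)) = true); auto.
    apply env_sim_rename_let_gen with (P := P).
    - eapply env_sim_mono; [|exact HE]. auto.
    - intros j Hj. destruct (Nat.lt_ge_cases j (length bs)); [left; auto|right].
      apply HO with (nth i bs (LVar 0)); [apply nth_In; auto|].
      replace (j - length bs + length bs) with j by lia. auto.
    - intros j Hj. left. exists j; auto. }
  intros i Hi; apply HX; exists i; auto.
Qed.

Lemma env_sim_rename_let P Q f s1 s2 bs :
  env_sim csim P f s1 s2 ->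
  (forall b i, In b bs -> occursb (i + length bs) b = true -> P i) ->
  (forall i, Q i -> i < length bs \/ P (i - length bs)) ->
  env_sim csim Q (up (length bs) f) (BLet bs :: s1)
    (BLet (map (rename (up (length bs) f)) bs) :: s2).
Proof.
  intros HE HO HQ. apply env_sim_rename_let_gen with P; auto.
  apply csim_rename_let_bodies with P; auto.
Qed.

Lemma push_perm_S_le n i : S i <= n -> push_perm n (S i) = i.
Proof.
  intros H. unfold push_perm. destruct n; [lia|]. simpl. destruct (Nat.leb_spec i n); lia.
Qed.

Lemma push_perm_S_gt n i : n < S i -> push_perm n (S i) = S i.
Proof.
  intros H. unfold push_perm. simpl. destruct n; simpl; auto.
  destruct (Nat.leb_spec i n); [lia|auto].
Qed.

Lemma lookup_lam_S i o s : lookup (S i) (BLam o :: s) = lookup i s.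
Proof. reflexivity. Qed.

Lemma env_sim_push_lam s1 s2 bs :
  env_sim_id csim s1 s2 ->
  env_sim csim (fun _ => True) (push_perm (length bs))
    (BLam (Some 0) :: BLet bs :: env_shift s1)
    (BLet (map (rename (up (length bs) S)) bs) :: BLam (Some 0) :: env_shift s2).
Proof.
  intros HE. pose proof (env_sim_id_shift _ _ HE) as HS. set (n := length bs).
  assert (H0 : env_sim csim (fun _ => True) S (env_shift s1) (BLam (Some 0) :: env_shift s2)).
  { destruct HS as [A1 A2]; split; simpl; eauto. }
  pose proof (csim_rename_let_bodies _ _ _ _ bs H0 (fun _ _ _ _ => I)) as HB. fold n in HB.
  assert (Hn : length (map (rename (up n S)) bs) = n) by (rewrite length_map; auto).
  destruct HS as [A1 A2]. split.
  - intros [|i] _.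
    + change (push_perm n 0) with n. rewrite lookup_let_ge by lia.
      rewrite Hn, Nat.sub_diag. simpl; auto.
    + rewrite lookup_lam_S. destruct (Nat.le_gt_cases (S i) n).
      * rewrite push_perm_S_le by auto. rewrite !lookup_let_lt by lia. simpl; auto.
      * rewrite push_perm_S_gt by auto. rewrite lookup_let_ge by lia.
        rewrite lookup_let_ge by lia. rewrite Hn.
        replace (S i - n) with (S (i - n)) by lia. rewrite lookup_lam_S. auto.
  - intros [|i] b1 t1 b2 t2 _ E1 E2; [simpl in E1; discriminate|].
    rewrite lookup_lam_S in E1. destruct (Nat.le_gt_cases (S i) n).
    + rewrite push_perm_S_le in E2 by auto.
      rewrite lookup_let_lt in E1, E2 by lia. inversion E1; inversion E2; subst.
      rewrite nth_map_lt by lia. apply HB; lia.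
    + rewrite push_perm_S_gt in E2 by auto. rewrite lookup_let_ge in E1 by lia.
      rewrite lookup_let_ge in E2 by lia.
      rewrite Hn in E2. replace (S i - n) with (S (i - n)) in E2 by lia.
      rewrite lookup_lam_S in E2. eauto.
Qed.

Section Merge.
Variables (s1 s2 : env) (bs1 bs2 : list lterm).
Let m := length bs2.
Let B := bs2 ++ map (rename (fun k => k + m)) bs1.
Hypothesis HE : env_sim_id csim s1 s2.

Lemma merge_length : length B = m + length bs1.
Proof. unfold B. rewrite length_app, length_map. auto. Qed.

Lemma merge_nth_outer i : i < length bs1 ->
  nth (i + m) B (LVar 0) = rename (fun k => k + m) (nth i bs1 (LVar 0)).
Proof.
  intros H. unfold B. rewrite app_nth2 by lia. fold m. replace (i + m - m) with i by lia.
  apply nth_map_lt; auto.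
Qed.

Lemma merge_nth_inner i : i < m -> nth i B (LVar 0) = nth i bs2 (LVar 0).
Proof. intros H. unfold B. apply app_nth1. auto. Qed.

Lemma csim_merge_outer i : i < length bs1 ->
  csim (nth i bs1 (LVar 0), BLet bs1 :: s1)
       (rename (fun k => k + m) (nth i bs1 (LVar 0)), BLet B :: s2).
Proof.
  set (X := fun c1 c2 => exists i, i < length bs1 /\ c1 = (nth i bs1 (LVar 0), BLet bs1 :: s1) /\
     c2 = (rename (fun k => k + m) (nth i bs1 (LVar 0)), BLet B :: s2)).
  assert (HX : forall c1 c2, X c1 c2 -> csim c1 c2).
  { apply csim_coind. intros c1 c2 (j & Hj & -> & ->).
    apply csim_rename with (P := fun _ => True); auto.
    destruct HE as [H1 H2]. pose proof merge_length as HL. split.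
    - intros k _. destruct (Nat.lt_ge_cases k (length bs1)).
      + rewrite !lookup_let_lt by lia. simpl; auto.
      + rewrite !lookup_let_ge by lia. rewrite HL.
        replace (k + m - (m + length bs1)) with (k - length bs1) by lia. auto.
    - intros k b1 t1 b2 t2 _ E1 E2. destruct (Nat.lt_ge_cases k (length bs1)).
      + rewrite lookup_let_lt in E1, E2 by lia. inversion E1; inversion E2; subst.
        rewrite merge_nth_outer by auto. left; exists k; auto.
      + rewrite lookup_let_ge in E1, E2 by lia. rewrite HL in E2.
        replace (k + m - (m + length bs1)) with (k - length bs1) in E2 by lia. right; eauto. }
  intros Hi; apply HX; exists i; auto.
Qed.

Lemma env_sim_merge_gen (R : closure -> closure -> Prop) :
  env_sim_id R s1 s2 ->
  (forall i, i < m ->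
     R (nth i bs2 (LVar 0), BLet bs2 :: BLet bs1 :: s1) (nth i B (LVar 0), BLet B :: s2)) ->
  (forall i, i < length bs1 ->
     R (nth i bs1 (LVar 0), BLet bs1 :: s1) (nth (i + m) B (LVar 0), BLet B :: s2)) ->
  env_sim_id R (BLet bs2 :: BLet bs1 :: s1) (BLet B :: s2).
Proof.
  intros [H1 H2] HA HB. pose proof merge_length as HL. split.
  - intros j _. destruct (Nat.lt_ge_cases j m).
    + rewrite !lookup_let_lt by lia. simpl; auto.
    + rewrite lookup_let_ge by lia. fold m. destruct (Nat.lt_ge_cases (j - m) (length bs1)).
      * rewrite !lookup_let_lt by lia. simpl; auto.
      * rewrite !lookup_let_ge by lia. rewrite HL.
        replace (j - m - length bs1) with (j - (m + length bs1)) by lia. auto.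
  - intros j b1 t1 b2 t2 _ E1 E2. destruct (Nat.lt_ge_cases j m).
    + rewrite lookup_let_lt in E1, E2 by lia. inversion E1; inversion E2; subst. auto.
    + rewrite lookup_let_ge in E1 by lia. fold m in E1.
      destruct (Nat.lt_ge_cases (j - m) (length bs1)).
      * rewrite lookup_let_lt in E1, E2 by lia. inversion E1; inversion E2; subst.
        replace j with ((j - m) + m) at 2 by lia. apply HB; auto.
      * rewrite lookup_let_ge in E1, E2 by lia. rewrite HL in E2.
        replace (j - m - length bs1) with (j - (m + length bs1)) in E1 by lia. eauto.
Qed.

Lemma env_sim_merge : env_sim_id csim (BLet bs2 :: BLet bs1 :: s1) (BLet B :: s2).
Proof.
  set (X := fun c1 c2 => exists i, i < m /\
     c1 = (nth i bs2 (LVar 0), BLet bs2 :: BLet bs1 :: s1) /\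
     c2 = (nth i B (LVar 0), BLet B :: s2)).
  assert (HB : forall i, i < length bs1 ->
     csim (nth i bs1 (LVar 0), BLet bs1 :: s1) (nth (i + m) B (LVar 0), BLet B :: s2)).
  { intros i Hi. rewrite merge_nth_outer by auto. apply csim_merge_outer; auto. }
  assert (HX : forall c1 c2, X c1 c2 -> csim c1 c2).
  { apply csim_coind. intros c1 c2 (i & Hi & -> & ->). rewrite merge_nth_inner by auto.
    apply csim_env. apply env_sim_merge_gen.
    - eapply env_sim_mono; [|exact HE]. auto.
    - intros j Hj; left; exists j; auto.
    - intros j Hj; right; auto. }
  apply env_sim_merge_gen; auto. intros i Hi; apply HX; exists i; auto.
Qed.
End Merge.

Lemma kept_cons b bs x mask :
  kept (b :: bs) (x :: mask) = if x then b :: kept bs mask else kept bs mask.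
Proof. unfold kept; simpl; destruct x; reflexivity. Qed.

Lemma count_true_cons x l : count_true (x :: l) = (if x then 1 else 0) + count_true l.
Proof. unfold count_true; simpl; destruct x; reflexivity. Qed.

Lemma length_kept bs mask :
  length mask = length bs -> length (kept bs mask) = count_true mask.
Proof.
  revert mask; induction bs as [|b bs IH]; intros [|x mask] H; simpl in H; try discriminate.
  - reflexivity.
  - rewrite kept_cons, count_true_cons. destruct x; simpl; rewrite IH; auto.
Qed.

Lemma nth_kept bs mask j :
  length mask = length bs -> j < length bs -> nth j mask true = true ->
  count_true (firstn j mask) < length (kept bs mask) /\
  nth (count_true (firstn j mask)) (kept bs mask) (LVar 0) = nth j bs (LVar 0).
Proof.
  revert mask j; induction bs as [|b bs IH]; intros [|x mask] j H Hj Hm; simpl in H;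
    try discriminate.
  - simpl in Hj; lia.
  - rewrite kept_cons. destruct j as [|j].
    + simpl in Hm. subst x. simpl. split; [unfold count_true; simpl; lia|reflexivity].
    + simpl firstn. rewrite count_true_cons. simpl in Hm, Hj.
      destruct (IH mask j) as [A1 A2]; try lia; auto.
      destruct x; simpl; split; auto; lia.
Qed.

Section GarbageCollection.
Variables (bs : list lterm) (mask : list bool) (s1 s2 : env).
Let n := length bs.
Let g := gc_ren n mask.
Let K := map (rename g) (kept bs mask).
Hypothesis Hlen : length mask = n.
Hypothesis Hgc : forall i, i < n -> nth i mask true = false ->
  forall j, j < n -> nth j mask true = true -> occursb i (nth j bs (LVar 0)) = false.
Hypothesis HE : env_sim_id csim s1 s2.

Lemma gc_length : length K = count_true mask.
Proof. unfold K. rewrite length_map. apply length_kept; auto. Qed.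

Lemma gc_nth j : j < n -> nth j mask true = true ->
  g j < length K /\ nth (g j) K (LVar 0) = rename g (nth j bs (LVar 0)).
Proof.
  intros Hj Hm. destruct (nth_kept bs mask j) as [A1 A2]; auto.
  assert (E : g j = count_true (firstn j mask)).
  { unfold g, gc_ren. apply Nat.ltb_lt in Hj. rewrite Hj. auto. }
  rewrite E. unfold K. rewrite length_map. split; auto.
  rewrite nth_map_lt by auto. rewrite A2. auto.
Qed.

Lemma gc_ren_ge j : n <= j -> g j = j - n + count_true mask.
Proof. intros H. unfold g, gc_ren. destruct (Nat.ltb_spec j n); [lia|auto]. Qed.

Lemma env_sim_gc_gen (R : closure -> closure -> Prop) (Q : nat -> Prop) :
  env_sim_id R s1 s2 ->
  (forall j, Q j -> j < n -> nth j mask true = true) ->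
  (forall i, i < n -> nth i mask true = true ->
     R (nth i bs (LVar 0), BLet bs :: s1) (rename g (nth i bs (LVar 0)), BLet K :: s2)) ->
  env_sim R Q g (BLet bs :: s1) (BLet K :: s2).
Proof.
  intros [H1 H2] HQ HB. pose proof gc_length as HK. split.
  - intros j Hq. destruct (Nat.lt_ge_cases j n).
    + destruct (gc_nth j) as [B1 B2]; auto.
      rewrite !lookup_let_lt by auto. simpl; auto.
    + rewrite gc_ren_ge by auto. rewrite lookup_let_ge by (unfold n in *; lia).
      rewrite lookup_let_ge by lia. rewrite HK.
      replace (j - n + count_true mask - count_true mask) with (j - n) by lia. apply H1; auto.
  - intros j b1 t1 b2 t2 Hq E1 E2. destruct (Nat.lt_ge_cases j n).
    + destruct (gc_nth j) as [B1 B2]; auto.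
      rewrite lookup_let_lt in E1 by auto. rewrite lookup_let_lt in E2 by auto.
      inversion E1; inversion E2; subst. rewrite B2. apply HB; auto.
    + rewrite gc_ren_ge in E2 by auto. rewrite lookup_let_ge in E1 by (unfold n in *; lia).
      rewrite lookup_let_ge in E2 by lia. rewrite HK in E2.
      replace (j - n + count_true mask - count_true mask) with (j - n) in E2 by lia. eauto.
Qed.

Lemma csim_gc_bodies i : i < n -> nth i mask true = true ->
  csim (nth i bs (LVar 0), BLet bs :: s1) (rename g (nth i bs (LVar 0)), BLet K :: s2).
Proof.
  set (X := fun c1 c2 => exists i, i < n /\ nth i mask true = true /\
     c1 = (nth i bs (LVar 0), BLet bs :: s1) /\
     c2 = (rename g (nth i bs (LVar 0)), BLet K :: s2)).
  assert (HX : forall c1 c2, X c1 c2 -> csim c1 c2).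
  { apply csim_coind. intros c1 c2 (k & Hk & Hm & -> & ->).
    apply csim_rename with (P := fun j => occursb j (nth k bs (LVar 0)) = true); auto.
    apply env_sim_gc_gen.
    - eapply env_sim_mono; [|exact HE]. auto.
    - intros j Hj Hjn. destruct (nth j mask true) eqn:Ej; auto.
      rewrite (Hgc j Hjn Ej k Hk Hm) in Hj. discriminate.
    - intros j Hj Hm'. left. exists j; auto. }
  intros Hi Hm; apply HX; exists i; auto.
Qed.

Lemma env_sim_gc (t : lterm) :
  (forall j, j < n -> nth j mask true = false -> occursb j t = false) ->
  env_sim csim (fun j => occursb j t = true) g (BLet bs :: s1) (BLet K :: s2).
Proof.
  intros Ht. apply env_sim_gc_gen; auto.
  - intros j Hj Hjn. destruct (nth j mask true) eqn:Ej; auto. rewrite Ht in Hj; auto.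
  - apply csim_gc_bodies.
Qed.
End GarbageCollection.

Definition head_sim (h1 h2 : head) : Prop :=
  match h1, h2 with
  | HLam t1 s1, HLam t2 s2 => csim (t1, env_lam s1) (t2, env_lam s2)
  | HApp a1 b1 s1, HApp a2 b2 s2 => csim (a1, s1) (a2, s2) /\ csim (b1, s1) (b2, s2)
  | HVar j, HVar k => j = k
  | _, _ => False
  end.

Definition whnf_simulated (t2 : lterm) (s2 : env) (h2 : head) : Prop :=
  forall t1 s1, csim (t1, s1) (t2, s2) -> exists h1, whnf t1 s1 h1 /\ head_sim h1 h2.

Definition env_simulated (t : lterm) (s2 : env) (h2 : head) : Prop :=
  forall s1, env_sim_id csim s1 s2 -> exists h1, whnf t s1 h1 /\ head_sim h1 h2.

Lemma csim_inv t1 s1 t2 s2 : csim (t1, s1) (t2, s2) ->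
  (exists P f, t2 = rename f t1 /\ (forall i, occursb i t1 = true -> P i) /\
               env_sim csim P f s1 s2) \/
  (t2 = t1 /\ env_sim_id csim s1 s2) \/
  (exists d, unf_step d t1 t2 /\ env_sim_id csim s1 s2) \/
  (exists bs t2', t2 = LLet bs t2' /\ csim (t1, s1) (t2', BLet bs :: s2)).
Proof.
  intros H. apply csim_unfold in H. inversion H; subst.
  - left. exists P, f; auto.
  - right; left; auto.
  - right; right; left; eauto.
  - right; right; right; eauto.
Qed.

Ltac csim_cases H :=
  apply csim_inv in H;
  destruct H as [(P & f & Eren & Hocc & Henv)|[(Eeq & Henv)|[(d & Hst & Henv)|
                 (bs' & t2' & Elet & Hcs)]]].

Lemma env_simulated_nil t s h s1 : env_simulated t s h -> env_sim_id csim s1 s ->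
  exists h1, whnf (LLet [] t) s1 h1 /\ head_sim h1 h.
Proof.
  intros Hid HE. destruct (Hid (BLet [] :: s1)) as [h1 [A1 A2]]; [apply env_sim_id_nil; auto|].
  exists h1; split; auto. constructor; auto.
Qed.

Lemma whnf_simulated_lam t s : whnf_simulated (LLam t) s (HLam t s).
Proof.
  assert (Hid : env_simulated (LLam t) s (HLam t s)).
  { intros s0 He. exists (HLam t s0). split; [constructor|]. simpl.
    constructor. apply csim_env. apply env_sim_id_lam; auto. }
  intros t1 s1 Hc. csim_cases Hc.
  - destruct t1 as [k|u|a b|bs u]; simpl in Eren; try discriminate. inversion Eren; subst.
    exists (HLam u s1). split; [constructor|]. simpl. constructor.
    apply csim_rename with (P := fun i => occursb i u = true); auto.
    apply env_sim_lam with P; auto.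
    intros [|i] Hi; [left; auto|right]. simpl. rewrite Nat.sub_0_r. apply Hocc. simpl. auto.
  - subst. apply Hid; auto.
  - inversion Hst; subst.
    + match goal with H : unf_root _ _ |- _ => inversion H; subst end.
      * eexists. split; [constructor; constructor|]. simpl. constructor.
        apply csim_let. constructor. apply csim_rename with (P := fun _ => True); auto.
        apply env_sim_push_lam; auto.
      * eapply env_simulated_nil; eassumption.
    + eexists. split; [constructor|]. simpl. constructor. eapply csim_step; [eassumption|].
      apply env_sim_id_lam; auto.
  - discriminate.
Qed.

Lemma whnf_simulated_app a b s : whnf_simulated (LApp a b) s (HApp a b s).
Proof.
  assert (Hid : env_simulated (LApp a b) s (HApp a b s)).
  { intros s0 He. exists (HApp a b s0). split; [constructor|]. simpl.
    split; constructor; apply csim_env; auto. }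
  intros t1 s1 Hc. csim_cases Hc.
  - destruct t1 as [k|u|a1 b1|bs u]; simpl in Eren; try discriminate. inversion Eren; subst.
    exists (HApp a1 b1 s1). split; [constructor|]. simpl. split; constructor.
    + apply csim_rename with (P := fun i => occursb i a1 = true); auto.
      eapply env_sim_sub; [|eassumption]. intros i Hi. apply Hocc. simpl. rewrite Hi. auto.
    + apply csim_rename with (P := fun i => occursb i b1 = true); auto.
      eapply env_sim_sub; [|eassumption]. intros i Hi. apply Hocc. simpl.
      rewrite Hi, orb_true_r. auto.
  - subst. apply Hid; auto.
  - inversion Hst; subst.
    + match goal with H : unf_root _ _ |- _ => inversion H; subst end.
      * eexists. split; [constructor; constructor|]. simpl. split; constructor;
          apply csim_let; constructor; apply csim_env; apply env_sim_id_let_same; auto.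
      * eapply env_simulated_nil; eassumption.
    + eexists. split; [constructor|]. simpl. split; constructor.
      * eapply csim_step; eauto.
      * apply csim_env; auto.
    + eexists. split; [constructor|]. simpl. split; constructor.
      * apply csim_env; auto.
      * eapply csim_step; eauto.
  - discriminate.
Qed.

Lemma env_simulated_let bs t s h :
  whnf_simulated t (BLet bs :: s) h -> env_simulated (LLet bs t) s h.
Proof.
  intros IH s0 He. destruct (IH t (BLet bs :: s0)) as [h1 [A1 A2]].
  - constructor. apply csim_env. apply env_sim_id_let_same; auto.
  - exists h1; split; auto. constructor; auto.
Qed.

Lemma whnf_simulated_let_root bs t s h t1 s1 :
  whnf_simulated t (BLet bs :: s) h -> unf_root t1 (LLet bs t) -> env_sim_id csim s1 s ->
  exists h1, whnf t1 s1 h1 /\ head_sim h1 h.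
Proof.
  intros IH Hr HE. remember (LLet bs t) as t2 eqn:E.
  destruct Hr as [bs0 a b|bs0 u|bs0 i Hi|bs1 bs2 u|bs0 u mask Hlen Hgc|u];
    try discriminate; [injection E as <- <- ..|subst].
  - destruct (IH (nth i bs0 (LVar 0)) (BLet bs0 :: s1)) as [h1 [A1 A2]].
    + constructor. apply csim_env. apply env_sim_id_let_same; auto.
    + exists h1; split; auto. constructor. eapply whnf_body; [|exact A1].
      apply lookup_let_lt; auto.
  - destruct (IH u (BLet bs2 :: BLet bs1 :: s1)) as [h1 [A1 A2]].
    + constructor. apply csim_env. apply env_sim_merge; auto.
    + exists h1; split; auto. do 2 constructor; auto.
  - destruct (IH u (BLet bs0 :: s1)) as [h1 [A1 A2]].
    + constructor. apply csim_rename with (P := fun i => occursb i u = true); auto.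
      apply env_sim_gc; auto.
      * intros i Hi Hm j Hj Hm'. apply (proj2 (Hgc i Hi Hm)); auto.
      * intros j Hj Hm. apply (proj1 (Hgc j Hj Hm)).
    + exists h1; split; auto. constructor; auto.
  - eapply env_simulated_nil; [apply env_simulated_let|]; eassumption.
Qed.

Lemma nth_letbind_step bs1 bs2 s t d : unf_step d s t ->
  forall i, i < length (bs1 ++ s :: bs2) ->
  nth i (bs1 ++ s :: bs2) (LVar 0) = nth i (bs1 ++ t :: bs2) (LVar 0) \/
  exists d', unf_step d' (nth i (bs1 ++ s :: bs2) (LVar 0)) (nth i (bs1 ++ t :: bs2) (LVar 0)).
Proof.
  intros Hst i Hi. destruct (lt_eq_lt_dec i (length bs1)) as [[H|H]|H].
  - left. rewrite !app_nth1 by auto. auto.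
  - right. subst. rewrite !nth_middle. eauto.
  - left. rewrite !app_nth2 by lia. destruct (i - length bs1) eqn:E; [lia|]. reflexivity.
Qed.

Lemma whnf_simulated_let bs t s h :
  whnf_simulated t (BLet bs :: s) h -> whnf_simulated (LLet bs t) s h.
Proof.
  intros IH t1 s1 Hc. csim_cases Hc.
  - destruct t1 as [k|u|a1 b1|l u]; simpl in Eren; try discriminate. inversion Eren; subst.
    destruct (IH u (BLet l :: s1)) as [h1 [A1 A2]].
    + constructor. apply csim_rename with (P := fun i => occursb i u = true); auto.
      apply env_sim_rename_let with P; auto.
      * intros b0 i Hb Ho. apply Hocc. simpl. apply orb_true_intro. left.
        apply existsb_exists. exists b0; auto.
      * intros i Hi. destruct (Nat.lt_ge_cases i (length l)); [left; auto|right].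
        apply Hocc. simpl. replace (i - length l + length l) with i by lia.
        rewrite Hi, orb_true_r. auto.
    + exists h1; split; auto. constructor; auto.
  - subst. eapply env_simulated_let; eassumption.
  - inversion Hst as [t0 t2 Hr| | | |d0 bs0 u0 t2 Hst'|d0 bs1 bs2 u0 t2 b0 Hst']; subst.
    + eapply whnf_simulated_let_root; eassumption.
    + destruct (IH u0 (BLet bs :: s1)) as [h1 [A1 A2]].
      * constructor. eapply csim_step; [eassumption|]. apply env_sim_id_let_same; auto.
      * exists h1; split; auto. constructor; auto.
    + destruct (IH t (BLet (bs1 ++ u0 :: bs2) :: s1)) as [h1 [A1 A2]].
      * constructor. apply csim_env. apply env_sim_id_let; auto.
        -- rewrite !length_app; auto.
        -- eapply nth_letbind_step; eassumption.
      * exists h1; split; auto. constructor; auto.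
  - inversion Elet; subst. destruct (IH t1 s1) as [h1 [A1 A2]]; auto.
Qed.

(* Up to an empty letrec, a closure simulating a variable is a renamed variable. *)
Lemma whnf_simulated_lookup i s h :
  (forall k s0 P f, P k -> env_sim csim P f s0 s -> f k = i ->
     exists h1, whnf (LVar k) s0 h1 /\ head_sim h1 h) ->
  whnf_simulated (LVar i) s h.
Proof.
  intros Hgen t1 s1 Hc. csim_cases Hc.
  - destruct t1 as [k|u|a1 b1|l u]; simpl in Eren; try discriminate. inversion Eren; subst.
    eapply Hgen; eauto. apply Hocc; simpl; apply Nat.eqb_refl.
  - subst. eapply Hgen; eauto. exact I.
  - inversion Hst; subst.
    match goal with H : unf_root _ _ |- _ => inversion H; subst end.
    destruct (Hgen i (BLet [] :: s1) (fun _ => True) (fun i => i)) as [h1 [A1 A2]]; auto.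
    + apply env_sim_id_nil; auto.
    + exists h1; split; auto. constructor; auto.
  - discriminate.
Qed.

Lemma whnf_simulated_var i s j : lookup i s = BoundVar j -> whnf_simulated (LVar i) s (HVar j).
Proof.
  intros Hl. apply whnf_simulated_lookup.
  intros k s0 P f Hk [He1 _] Hf. specialize (He1 k Hk). subst i. rewrite Hl in He1.
  destruct (lookup k s0) eqn:E; simpl in He1; try contradiction. subst.
  exists (HVar j); split; [constructor; auto|simpl; auto].
Qed.

Lemma whnf_simulated_body i s b tau h :
  lookup i s = BoundBody b tau -> whnf_simulated b tau h -> whnf_simulated (LVar i) s h.
Proof.
  intros Hl IH. apply whnf_simulated_lookup.
  intros k s0 P f Hk [He1 He2] Hf. specialize (He1 k Hk). subst i. rewrite Hl in He1.
  destruct (lookup k s0) as [| |b0 tau0] eqn:E; simpl in He1; try contradiction.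
  destruct (IH b0 tau0 (He2 k b0 tau0 b tau Hk E Hl)) as [h1 [A1 A2]].
  exists h1; split; auto. eapply whnf_body; eauto.
Qed.

Lemma csim_whnf t2 s2 h2 : whnf t2 s2 h2 -> whnf_simulated t2 s2 h2.
Proof.
  induction 1.
  - apply whnf_simulated_lam.
  - apply whnf_simulated_app.
  - apply whnf_simulated_let; auto.
  - apply whnf_simulated_var; auto.
  - eapply whnf_simulated_body; eauto.
Qed.

(** * Strongly convergent unfolding preserves the denotation *)

Lemma den_approx_csim D : forall t1 s1 t2 s2 N,
  csim (t1, s1) (t2, s2) -> den_approx D t2 s2 N -> den_approx D t1 s1 N.
Proof.
  induction D as [|D IH]; intros t1 s1 t2 s2 N Hc Hd; simpl in *; auto.
  destruct Hd as [h2 [Hw Hm]].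
  destruct (csim_whnf _ _ _ Hw _ _ Hc) as [h1 [Hw1 Hr]].
  exists h1; split; auto.
  destruct h1, h2; simpl in Hr; try contradiction; destruct N; try contradiction.
  - eapply IH; eauto.
  - destruct Hr, Hm; split; eapply IH; eauto.
  - congruence.
Qed.

Fixpoint lam_env (m : nat) : env := match m with 0 => [] | S m' => env_lam (lam_env m') end.

Lemma lookup_lam_env m k : k < m -> lookup k (lam_env m) = BoundVar k.
Proof.
  revert k; induction m as [|m IH]; intros k Hk; [lia|].
  destruct k as [|k]; simpl; auto.
  change (lookup k (env_shift (lam_env m)) = BoundVar (S k)).
  rewrite lookup_shift, IH by lia. reflexivity.
Qed.

Lemma agree_den_approx D : forall t N m, agree D t N -> (forall k, ifree k N -> k < m) ->
  den_approx D t (lam_env m) N.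
Proof.
  induction D as [|D IH]; intros t N m Ha Hf; simpl; auto.
  destruct t as [k|u|a b|bs u], N as [k'|N'|A B]; simpl in Ha; try contradiction.
  - subst. exists (HVar k'); split; auto. constructor. apply lookup_lam_env. apply Hf; constructor.
  - exists (HLam u (lam_env m)); split; [constructor|].
    change (den_approx D u (lam_env (S m)) N'). apply IH; auto.
    intros [|k] Hk; [lia|]. assert (k < m); [apply Hf; constructor; auto|lia].
  - destruct Ha. exists (HApp a b (lam_env m)); split; [constructor|].
    split; apply IH; auto; intros k Hk; apply Hf; [apply ifree_appl|apply ifree_appr]; auto.
Qed.

(* The depth-[D] approximation of [M] holds at a finite stage [ts N] of the
   unfolding and is pulled back to [L] along the steps before it. *)
Lemma unfolds_to_den L M : iclosed M -> unfolds_to L M -> den L [] M.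
Proof.
  intros Hcl (ts & steps & E0 & Hs & Hc). apply den_of_approx. intros D.
  destruct (Hc D) as [N HN]. destruct (HN N (le_n _)) as [_ Ha].
  assert (Hd : den_approx D (ts N) [] M).
  { change (@nil binder) with (lam_env 0). apply agree_den_approx; auto.
    intros k Hk; exfalso; apply (Hcl k); auto. }
  subst L. clear HN Ha. induction N as [|N IHN]; auto.
  apply IHN. eapply den_approx_csim; [|exact Hd].
  specialize (Hs N). destruct (steps N) as [d|].
  - constructor. eapply csim_step; [exact Hs|]. split; intros; simpl in *; auto; discriminate.
  - destruct Hs as [E _]. rewrite E. apply csim_refl.
Qed.

(** * Deleting an unused variable *)

Definition frob (t : iterm) : iterm :=
  match t with IVar k => IVar k | IAbs u => IAbs u | IApp a b => IApp a b end.

Lemma frob_eq t : t = frob t.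
Proof. destruct t; reflexivity. Qed.

Lemma idown_var c k : idown c (IVar k) = if k <? c then IVar k else IVar (k - 1).
Proof. rewrite (frob_eq (idown c (IVar k))). simpl. destruct (k <? c); reflexivity. Qed.

Lemma idown_abs c t : idown c (IAbs t) = IAbs (idown (S c) t).
Proof. rewrite (frob_eq (idown c (IAbs t))). reflexivity. Qed.

Lemma idown_app c t u : idown c (IApp t u) = IApp (idown c t) (idown c u).
Proof. rewrite (frob_eq (idown c (IApp t u))). reflexivity. Qed.

Definition del_index (c j : nat) : nat := if j <? c then j else j - 1.

Definition binder_del (c : nat) (x : binder) : binder :=
  match x with
  | BLam (Some j) => if j =? c then BLam None else BLam (Some (del_index c j))
  | e => e
  end.

Definition env_del (c : nat) (s : env) : env := map (binder_del c) s.

Definition binding_del (c : nat) (l : binding) : binding :=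
  match l with
  | BoundVar j => if j =? c then Unbound else BoundVar (del_index c j)
  | BoundBody b t => BoundBody b (env_del c t)
  | Unbound => Unbound
  end.

Lemma lookup_del c i s : lookup i (env_del c s) = binding_del c (lookup i s).
Proof.
  revert i; induction s as [|[[j|]|bs] s IH]; intros i; simpl; auto.
  - destruct (j =? c) eqn:E; destruct i; simpl; rewrite ?E; auto.
  - destruct i; simpl; auto.
  - destruct (i <? length bs); simpl; auto.
Qed.

Definition head_del (c : nat) (h : head) : head :=
  match h with
  | HLam t s => HLam t (env_del c s)
  | HApp a b s => HApp a b (env_del c s)
  | HVar j => HVar (del_index c j)
  end.

Lemma whnf_del c t s h : whnf t s h -> h <> HVar c -> whnf t (env_del c s) (head_del c h).
Proof.
  induction 1 as [t s|a b s|bs t s h Hw IH|i s j Hl|i s b tau h Hl Hw IH]; intros Hne; simpl.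
  - constructor.
  - constructor.
  - constructor. apply IH; auto.
  - constructor. rewrite lookup_del, Hl. simpl. destruct (j =? c) eqn:E; auto.
    apply Nat.eqb_eq in E; subst; congruence.
  - eapply whnf_body; [|apply IH; auto]. rewrite lookup_del, Hl. reflexivity.
Qed.

Lemma env_lam_del c s : env_lam (env_del c s) = env_del (S c) (env_lam s).
Proof.
  unfold env_lam, env_del, env_shift. simpl. f_equal. rewrite !map_map. apply map_ext.
  intros [[j|]|bs]; simpl; auto. unfold del_index.
  destruct (Nat.eqb_spec j c); simpl; auto.
  destruct (Nat.ltb_spec j c); destruct (Nat.ltb_spec (S j) (S c)); simpl; try lia; auto.
  f_equal. f_equal. lia.
Qed.

Lemma den_del : forall t s N c, den t s N -> ~ ifree c N -> den t (env_del c s) (idown c N).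
Proof.
  cofix CH. intros t s N c Hd Hf.
  destruct Hd as [t s t' s' N Hw Hd|t s a b s' A B Hw Ha Hb|t s j Hw].
  - rewrite idown_abs. apply den_lam with t' (env_del c s').
    + apply (whnf_del c) in Hw; [exact Hw|discriminate].
    + rewrite env_lam_del. apply CH; auto. intros H; apply Hf; constructor; auto.
  - rewrite idown_app. apply den_app with a b (env_del c s').
    + apply (whnf_del c) in Hw; [exact Hw|discriminate].
    + apply CH; auto. intros H; apply Hf; apply ifree_appl; auto.
    + apply CH; auto. intros H; apply Hf; apply ifree_appr; auto.
  - assert (j <> c) by (intros ->; apply Hf; constructor).
    rewrite idown_var. apply (whnf_del c) in Hw; [|congruence]. simpl in Hw.
    unfold del_index in Hw. destruct (j <? c); apply den_var; auto.
Qed.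

Fixpoint out_vars (s : env) : list nat :=
  match s with
  | [] => []
  | BLam (Some j) :: s' => j :: out_vars s'
  | _ :: s' => out_vars s'
  end.

Lemma out_vars_app a b : out_vars (a ++ b) = out_vars a ++ out_vars b.
Proof. induction a as [|[[j|]|bs] a IH]; simpl; auto. rewrite IH; auto. Qed.

Lemma out_vars_shift s : out_vars (env_shift s) = map S (out_vars s).
Proof. induction s as [|[[j|]|bs] s IH]; simpl; auto. rewrite IH; auto. Qed.

Lemma out_vars_lam s : out_vars (env_lam s) = 0 :: map S (out_vars s).
Proof. unfold env_lam. simpl. rewrite out_vars_shift. auto. Qed.

Lemma out_vars_del0 s :
  out_vars (env_del 0 s) = map pred (filter (fun j => negb (j =? 0)) (out_vars s)).
Proof.
  induction s as [|[[j|]|bs] s IH]; simpl; auto.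
  destruct j as [|j]; simpl; auto. rewrite IH. unfold del_index. simpl. rewrite Nat.sub_0_r. auto.
Qed.

Lemma lookup_var_out_vars i s j : lookup i s = BoundVar j -> In j (out_vars s).
Proof.
  revert i; induction s as [|[[k|]|bs] s IH]; intros i H; simpl in *; try discriminate.
  - destruct i; [inversion H; auto|right; eauto].
  - destruct i; [discriminate|eauto].
  - destruct (i <? length bs); [discriminate|eauto].
Qed.

Lemma lookup_body_suffix i s b tau : lookup i s = BoundBody b tau ->
  exists pre bs rest, s = pre ++ tau /\ tau = BLet bs :: rest /\ In b bs.
Proof.
  revert i; induction s as [|[o|bs] s IH]; intros i H; simpl in *; try discriminate.
  - destruct i; [destruct o; discriminate|].
    destruct (IH _ H) as (pre & bs & rest & E1 & E2 & E3).
    exists (BLam o :: pre), bs, rest. subst; auto.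
  - destruct (Nat.ltb_spec i (length bs)).
    + inversion H; subst. exists [], bs, s. split; auto. split; auto. apply nth_In; auto.
    + destruct (IH _ H) as (pre & bs' & rest & E1 & E2 & E3).
      exists (BLet bs :: pre), bs', rest. subst; auto.
Qed.

Definition head_env (h : head) : env :=
  match h with HLam _ s => s | HApp _ _ s => s | HVar _ => [] end.

Lemma whnf_out_vars t s h : whnf t s h ->
  match h with
  | HVar j => In j (out_vars s)
  | _ => exists pre, out_vars s = pre ++ out_vars (head_env h)
  end.
Proof.
  induction 1 as [t s|a b s|bs t s h Hw IH|i s j Hl|i s b tau h Hl Hw IH]; simpl.
  - exists []; auto.
  - exists []; auto.
  - destruct h; simpl in *; auto.
  - eapply lookup_var_out_vars; eauto.
  - destruct (lookup_body_suffix _ _ _ _ Hl) as (pre & bs & rest & E1 & _ & _).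
    rewrite E1, out_vars_app. destruct h; simpl in *.
    + destruct IH as [p E]. exists (out_vars pre ++ p). rewrite E, app_assoc; auto.
    + destruct IH as [p E]. exists (out_vars pre ++ p). rewrite E, app_assoc; auto.
    + apply in_or_app; auto.
Qed.

Lemma ifree_den_out_vars k N : ifree k N -> forall t s, den t s N -> In k (out_vars s).
Proof.
  induction 1 as [k|k u Hf IH|k u v Hf IH|k u v Hf IH]; intros t s Hd; inversion Hd; subst;
  match goal with Hw : whnf _ _ _ |- _ => pose proof (whnf_out_vars _ _ _ Hw) as X; simpl in X end.
  - auto.
  - destruct X as [pre E].
    match goal with Hd' : den _ (env_lam _) u |- _ => specialize (IH _ _ Hd') end.
    rewrite out_vars_lam in IH. destruct IH as [IH|IH]; [discriminate|].
    apply in_map_iff in IH. destruct IH as [x [Ex Hx]]. injection Ex as ->.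
    rewrite E. apply in_or_app; auto.
  - destruct X as [pre E]. rewrite E. apply in_or_app. right. eapply IH; eauto.
  - destruct X as [pre E]. rewrite E. apply in_or_app. right. eapply IH; eauto.
Qed.

(** * Closures reachable from a letrec-term *)

Inductive shape := ShLam | ShLet (bs : list lterm).

Definition env_shape (s : env) : list shape :=
  map (fun x => match x with BLam _ => ShLam | BLet bs => ShLet bs end) s.

Lemma env_shape_app a b : env_shape (a ++ b) = env_shape a ++ env_shape b.
Proof. unfold env_shape; apply map_app. Qed.

Lemma env_shape_shift s : env_shape (env_shift s) = env_shape s.
Proof. unfold env_shape, env_shift. rewrite map_map. apply map_ext. intros [[j|]|bs]; auto. Qed.

Lemma env_shape_del c s : env_shape (env_del c s) = env_shape s.
Proof.
  unfold env_shape, env_del. rewrite map_map. apply map_ext. intros [[j|]|bs]; simpl; auto.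
  destruct (j =? c); auto.
Qed.

Fixpoint lterm_nested_ind (P : lterm -> Prop) (HV : forall k, P (LVar k))
  (HL : forall t, P t -> P (LLam t)) (HA : forall a b, P a -> P b -> P (LApp a b))
  (HLet : forall bs t, (forall b, In b bs -> P b) -> P t -> P (LLet bs t)) (t : lterm)
  {struct t} : P t :=
  match t with
  | LVar k => HV k
  | LLam u => HL u (lterm_nested_ind P HV HL HA HLet u)
  | LApp a b => HA a b (lterm_nested_ind P HV HL HA HLet a) (lterm_nested_ind P HV HL HA HLet b)
  | LLet bs u => HLet bs u
      ((fix go (l : list lterm) : forall b, In b l -> P b :=
          match l with
          | [] => fun b H => False_ind _ H
          | x :: l' => fun b H =>
              match H with
              | or_introl E => eq_ind x P (lterm_nested_ind P HV HL HA HLet x) b E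
              | or_intror H' => go l' b H'
              end
          end) bs)
      (lterm_nested_ind P HV HL HA HLet u)
  end.

(* The subterm occurrences of [t], each with the shape of its binding context
   on top of [e]. *)
Fixpoint positions (t : lterm) (e : list shape) {struct t} : list (lterm * list shape) :=
  (t, e) :: match t with
            | LVar _ => []
            | LLam u => positions u (ShLam :: e)
            | LApp a b => positions a e ++ positions b e
            | LLet bs u => positions u (ShLet bs :: e) ++
                           flat_map (fun b => positions b (ShLet bs :: e)) bs
            end.

Lemma positions_self t e : In (t, e) (positions t e).
Proof. destruct t; left; auto. Qed.

Lemma positions_trans t : forall e x, In x (positions t e) ->
  forall y, In y (positions (fst x) (snd x)) -> In y (positions t e).
Proof.
  induction t as [k|u IH|a b IHa IHb|bs u IHb IH] using lterm_nested_ind; intros e x Hx y Hy;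
    simpl in Hx; destruct Hx as [<-|Hx]; auto.
  - contradiction.
  - right. eapply IH; eauto.
  - right. apply in_app_or in Hx. apply in_or_app.
    destruct Hx; [left; eapply IHa|right; eapply IHb]; eauto.
  - right. apply in_app_or in Hx. apply in_or_app. destruct Hx as [Hx|Hx].
    + left; eapply IH; eauto.
    + right. apply in_flat_map in Hx. destruct Hx as [b [Hb Hx]].
      apply in_flat_map. exists b; split; auto. eapply IHb; eauto.
Qed.

Section Reachable.
Variable L : lterm.
Let PL := positions L [].

Lemma positions_L_trans t e c : In (t, e) PL -> In c (positions t e) -> In c PL.
Proof. intros H1 H2. apply (positions_trans L [] (t, e) H1 c H2). Qed.

Definition reachable (t : lterm) (s : env) : Prop :=
  In (t, env_shape s) PL /\
  forall pre bs e', env_shape s = pre ++ ShLet bs :: e' ->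
    forall b, In b bs -> In (b, ShLet bs :: e') PL.

Lemma reachable_whnf t s h : whnf t s h -> reachable t s ->
  match h with
  | HLam t' s' => reachable (LLam t') s'
  | HApp a b s' => reachable (LApp a b) s'
  | HVar _ => True
  end.
Proof.
  induction 1 as [t s|a b s|bs t s h Hw IH|i s j Hl|i s b tau h Hl Hw IH];
    intros [G1 G2]; auto.
  - split; auto.
  - split; auto.
  - apply IH. split.
    + eapply positions_L_trans; [exact G1|]. simpl. right. apply in_or_app; left.
      apply positions_self.
    + intros [|x pre] bs' e' E b Hb; simpl in E; inversion E; subst.
      * eapply positions_L_trans; [exact G1|]. simpl. right. apply in_or_app; right.
        apply in_flat_map. exists b; split; auto. apply positions_self.
      * eapply G2; eauto.
  - destruct (lookup_body_suffix _ _ _ _ Hl) as (pre & bs & rest & E1 & E2 & E3). subst.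
    apply IH. rewrite env_shape_app in G2. simpl in G2 |- *. split.
    + eapply G2; eauto.
    + intros pre' bs' e' E b' Hb'. eapply (G2 (env_shape pre ++ pre')); eauto.
      rewrite <- app_assoc, <- E. reflexivity.
Qed.

Lemma reachable_lam t s : reachable (LLam t) s -> reachable t (env_lam s).
Proof.
  intros [G1 G2]. unfold env_lam. split; simpl; rewrite env_shape_shift.
  - eapply positions_L_trans; [exact G1|]. simpl. right; apply positions_self.
  - intros [|x pre] bs e' E b Hb; simpl in E; inversion E; subst. eapply G2; eauto.
Qed.

Lemma reachable_app a b s : reachable (LApp a b) s -> reachable a s /\ reachable b s.
Proof.
  intros [G1 G2]. split; split; auto; eapply positions_L_trans; try exact G1; simpl; right;
    apply in_or_app; [left|right]; apply positions_self.
Qed.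

Lemma reachable_del c t s : reachable t s -> reachable t (env_del c s).
Proof. unfold reachable; rewrite env_shape_del; auto. Qed.

End Reachable.

(** * The eager strategy *)

Lemma seq_prefix_nil a n pre x : seq a n = pre ++ x -> In a x -> pre = [].
Proof.
  intros E Hx. destruct pre as [|y pre]; auto. exfalso.
  destruct n; simpl in E; [discriminate|]. injection E as Ey E. subst y.
  assert (Hy : In a (seq (S a) n)) by (rewrite E; apply in_or_app; auto).
  apply in_seq in Hy. lia.
Qed.

Lemma out_vars_suffix s s' n pre :
  out_vars s = seq 0 n -> out_vars s = pre ++ out_vars s' ->
  (n = 0 \/ In 0 (out_vars s')) -> out_vars s' = seq 0 n.
Proof.
  intros E1 E2 [->|Hi].
  - simpl in E1. rewrite E1 in E2. symmetry in E2. apply app_eq_nil in E2. destruct E2; auto.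
  - rewrite E1 in E2. pose proof (seq_prefix_nil _ _ _ _ E2 Hi). subst. auto.
Qed.

Lemma seq_filter_pred a n : map pred (filter (fun j => negb (j =? 0)) (seq (S a) n)) = seq a n.
Proof. revert a; induction n as [|n IH]; intros a; simpl; auto. rewrite IH. auto. Qed.

(* Every prefixed term on an eager rewrite sequence is denoted by a reachable
   closure whose lambda binders carry exactly the prefix variables. *)
Definition gst_inv (L : lterm) (p : pterm) : Prop :=
  exists t s, reachable L t s /\ out_vars s = seq 0 (fst p) /\ den t s (snd p).

Lemma gst_inv_del L n N : gst_inv L (S n, N) -> ~ ifree 0 N -> gst_inv L (n, idown 0 N).
Proof.
  intros (t & s & G & E & D) Hf. exists t, (env_del 0 s). split; [apply reachable_del; auto|].
  split.
  - simpl in E |- *. rewrite out_vars_del0, E. simpl. apply seq_filter_pred.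
  - simpl. apply den_del; auto.
Qed.

(* Since the prefix is empty or its innermost variable occurs in [N], the
   binders dropped by weak head evaluation carry no prefix variable. *)
Lemma gst_inv_struct L n N a q :
  gst_inv L (n, N) -> (n = 0 \/ ifree 0 N) -> reg_step (n, N) a q -> a <> RDel -> gst_inv L q.
Proof.
  intros (t & s & G & E & D) Hf Hs Ha. simpl in E, D.
  destruct D as [t s t' s' N' Hw Hd|t s a0 b0 s' A B Hw HA HB|t s j Hw].
  - inversion Hs; subst; [|congruence].
    pose proof (reachable_whnf L _ _ _ Hw G) as G'.
    pose proof (whnf_out_vars _ _ _ Hw) as [pre Ep]. simpl in Ep.
    assert (Es : out_vars s' = seq 0 n).
    { apply (out_vars_suffix s s' n pre); auto. destruct Hf as [->|Hf]; [left; auto|right].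
      inversion Hf as [|k u Hf'| |]; subst.
      pose proof (ifree_den_out_vars _ _ Hf' _ _ Hd) as X. rewrite out_vars_lam in X.
      destruct X as [X|X]; [discriminate|]. apply in_map_iff in X.
      destruct X as [x [Ex Hx]]. injection Ex as ->. auto. }
    exists t', (env_lam s'). split; [apply reachable_lam; auto|]. split; auto.
    rewrite out_vars_lam, Es, seq_shift. reflexivity.
  - pose proof (reachable_whnf L _ _ _ Hw G) as G'. apply reachable_app in G'.
    destruct G' as [G1 G2].
    pose proof (whnf_out_vars _ _ _ Hw) as [pre Ep]. simpl in Ep.
    assert (Es : out_vars s' = seq 0 n).
    { apply (out_vars_suffix s s' n pre); auto. destruct Hf as [->|Hf]; [left; auto|right].
      inversion Hf; subst; eapply ifree_den_out_vars; eauto. }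
    inversion Hs; subst; [| |congruence].
    + exists a0, s'. auto.
    + exists b0, s'. auto.
  - inversion Hs; subst. congruence.
Qed.

Definition eager_step (p : pterm) (a : reg_label) : Prop :=
  (0 < fst p /\ ~ ifree 0 (snd p) /\ a = RDel) \/
  ((fst p = 0 \/ ifree 0 (snd p)) /\ a <> RDel /\ exists q, reg_step p a q).

Definition eager (M : iterm) : strategy :=
  fun l a => exists p, reg_seq (0, M) l p /\ eager_step p a.

Lemma reg_step_det p a q1 q2 : reg_step p a q1 -> reg_step p a q2 -> q1 = q2.
Proof. intros H1 H2; inversion H1; subst; inversion H2; subst; auto. Qed.

Lemma reg_seq_det p0 l p : reg_seq p0 l p -> forall q, reg_seq p0 l q -> p = q.
Proof.
  induction 1 as [|l p a q Hs IH Hst]; intros q' H2.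
  - inversion H2; auto. destruct l; discriminate.
  - inversion H2 as [E|l' p' a' q'' Hs' Hst' E]; subst.
    + destruct l; discriminate.
    + apply app_inj_tail in E. destruct E; subst.
      rewrite (IH _ Hs') in Hst. eapply reg_step_det; eauto.
Qed.

Lemma follows_reg_seq S p0 l p : follows S p0 l p -> reg_seq p0 l p.
Proof. induction 1; econstructor; eauto. Qed.

Lemma eager_scope_delimiting M : scope_delimiting (eager M) (0, M).
Proof.
  intros l p Hs [a [q Hq]]. split.
  - destruct (classic (0 < fst p /\ ~ ifree 0 (snd p))) as [Y|Y].
    + exists RDel, p. split; auto. left. destruct Y; auto.
    + exists a, p. split; auto. right. split; [|split; eauto].
      * destruct (fst p) eqn:E; [left; auto|right].
        apply NNPP. intros Hn. apply Y. split; auto; lia.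
      * intros ->. inversion Hq; subst. apply Y. simpl. split; auto; lia.
  - intros a' [p' [Hs' He]]. rewrite <- (reg_seq_det _ _ _ Hs _ Hs') in He.
    destruct He as [(H1 & H2 & ->)|(_ & _ & Hq')]; auto.
    destruct p as [[|n] N]; simpl in H1; [lia|]. eexists; constructor; auto.
Qed.

Lemma gst_inv_follows L M l p : den L [] M -> follows (eager M) (0, M) l p -> gst_inv L p.
Proof.
  intros Hd. induction 1 as [|l p a q Hf IH HS Hst].
  - exists L, []. split; [|split; auto]. split; simpl; [apply positions_self|].
    intros pre bs e' E. destruct pre; discriminate.
  - destruct HS as [p' [Hs' He]].
    rewrite <- (reg_seq_det _ _ _ (follows_reg_seq _ _ _ _ Hf) _ Hs') in He.
    destruct He as [(H1 & H2 & ->)|(H1 & H2 & _)].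
    + inversion Hst; subst. apply gst_inv_del; auto.
    + destruct p as [n N]. eapply gst_inv_struct; eauto.
Qed.

(** * Finiteness *)

Fixpoint envs_of_shape (b : nat) (e : list shape) : list env :=
  match e with
  | [] => [[]]
  | ShLam :: e' =>
      flat_map (fun s => (BLam None :: s) :: map (fun j => BLam (Some j) :: s) (seq 0 b))
               (envs_of_shape b e')
  | ShLet bs :: e' => map (cons (BLet bs)) (envs_of_shape b e')
  end.

Lemma in_envs_of_shape b s :
  (forall j, In j (out_vars s) -> j < b) -> In s (envs_of_shape b (env_shape s)).
Proof.
  induction s as [|[[j|]|bs] s IH]; intros H; simpl in *.
  - left; auto.
  - apply in_flat_map. exists s. split; [apply IH; auto|]. right. apply in_map_iff.
    exists j; split; auto. apply in_seq. specialize (H j (or_introl eq_refl)). lia.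
  - apply in_flat_map. exists s. split; [apply IH; auto|]. left; auto.
  - apply in_map. apply IH; auto.
Qed.

Lemma length_out_vars s : length (out_vars s) <= length s.
Proof. induction s as [|[[j|]|bs] s IH]; simpl; lia. Qed.

Lemma finite_pset_of_keys (K : Type) (keys : list K) (R : pterm -> K -> Prop)
  (P : pterm -> Prop) :
  (forall p, P p -> exists k, In k keys /\ R p k) ->
  (forall p q k, R p k -> R q k -> pbisim p q) -> finite_pset P.
Proof.
  intros Hc Hd.
  assert (G : forall ks, exists ps, forall p, P p -> (exists k, In k ks /\ R p k) ->
                 exists q, In q ps /\ pbisim p q).
  { induction ks as [|k ks IH].
    - exists []. intros p _ [k [[] _]].
    - destruct IH as [ps Hps].
      destruct (classic (exists p0, P p0 /\ R p0 k)) as [[p0 [HP0 HR0]]|N].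
      + exists (p0 :: ps). intros p Hp [k' [[<-|Hk] Hr]].
        * exists p0; split; [left; auto|]. eapply Hd; eauto.
        * destruct (Hps p Hp) as [q [Hq Hb]]; [eauto|]. exists q; split; [right|]; auto.
      + exists ps. intros p Hp [k' [[<-|Hk] Hr]].
        * exfalso; apply N; eauto.
        * apply Hps; eauto. }
  destruct (G keys) as [ps Hps]. exists ps. intros p Hp. apply Hps; auto.
Qed.

Lemma eager_gst_finite L M : den L [] M -> finite_pset (GST (eager M) M).
Proof.
  intros Hd.
  apply finite_pset_of_keys with
    (keys := flat_map (fun x => map (fun s => (fst x, s)) (envs_of_shape (length (snd x)) (snd x)))
               (positions L []))
    (R := fun p k => out_vars (snd k) = seq 0 (fst p) /\ den (fst k) (snd k) (snd p)).
  - intros p [l Hf]. destruct (gst_inv_follows L M l p Hd Hf) as (t & s & [G1 _] & E & D).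
    exists (t, s). split; auto.
    apply in_flat_map. exists (t, env_shape s). split; auto. apply in_map. simpl.
    replace (length (env_shape s)) with (length s) by (unfold env_shape; rewrite length_map; auto).
    apply in_envs_of_shape. intros j Hj. rewrite E in Hj. apply in_seq in Hj.
    pose proof (length_out_vars s) as Hlen. rewrite E, length_seq in Hlen. lia.
  - intros [n1 N1] [n2 N2] [t s] [E1 D1] [E2 D2]. simpl in *. split.
    + rewrite E1 in E2. apply (f_equal (@length nat)) in E2. rewrite !length_seq in E2. auto.
    + eapply den_det; eauto.
Qed.

Theorem mainTheorem8 (M : iterm) :
  iclosed M -> letrec_expressible M -> strongly_regular M.
Proof.
  intros Hcl [L HL]. exists (eager M). split.
  - apply eager_scope_delimiting.
  - apply (eager_gst_finite L). apply unfolds_to_den; auto.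
Qed.
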